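(* Let $\mathrm R(t,s):=\sin\left(\frac{\pi}{2}t\right)\frac{s+\sqrt{8-s^2}}{2\sqrt2}$ on $[0,1]\times[2,2\sqrt2]$ and let $\widehat{\mathrm R}$ be its concave envelope on this domain. For $(t,s)\in(0,1]\times[2,2\sqrt2]$, writing $\epsilon=1-\frac{s}{2\sqrt2}$, one has $\mathrm R(t,s)=\widehat{\mathrm R}(t,s)$ if and only if $$\frac{\tan\left(\frac{\pi}{2}t\right)}{\frac{\pi}{2}t}\ \ge\ \frac{2+\sqrt{(2-\epsilon)\epsilon}-\epsilon(5-2\epsilon)}{2(1-\epsilon)}$$ (with the left side interpreted as $+\infty$ at $t=1$). Moreover, this condition is implied by $\frac{\frac{\pi}{2}t}{\sin(\frac{\pi}{2}t)}\ge \frac{s+\sqrt{8-s^2}}{2\sqrt2}$, i.e. by $\frac{\pi}{2}t\ge \mathrm R(t,s)$.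
   Context: The concave envelope of a function $F$ on a convex domain $D$ is the pointwise smallest concave function $\widehat F:D\to\mathbb R$ with $\widehat F\ge F$ on $D$. *)

From HB Require Import structures.
From mathcomp Require Import all_boot all_order all_algebra.
From mathcomp Require Import all_classical all_reals all_analysis.
Set Implicit Arguments. Unset Strict Implicit. Unset Printing Implicit Defensive.
Import Order.TTheory GRing.Theory Num.Theory.
Local Open Scope classical_set_scope.
Local Open Scope ring_scope.

Definition Dom (R : realType) : set (R * R) :=
  [set p | 0 <= p.1 <= 1 /\ 2 <= p.2 <= 2 * Num.sqrt 2].

Definition concave_on (R : realType) (D : set (R * R)) (g : R -> R -> R) : Prop :=
  forall p q : R * R, D p -> D q -> forall l : R, 0 <= l <= 1 ->
    l * g p.1 p.2 + (1 - l) * g q.1 q.2 <=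
    g (l * p.1 + (1 - l) * q.1) (l * p.2 + (1 - l) * q.2).

Definition concave_envelope (R : realType) (D : set (R * R)) (F : R -> R -> R)
  (t s : R) : R :=
  inf [set g t s | g in [set g : R -> R -> R |
        concave_on D g /\ forall p, D p -> F p.1 p.2 <= g p.1 p.2]].

Definition Rfun (R : realType) (t s : R) : R :=
  sin (pi / 2 * t) * ((s + Num.sqrt (8 - s ^+ 2)) / (2 * Num.sqrt 2)).

Definition epsilon_of (R : realType) (s : R) : R := 1 - s / (2 * Num.sqrt 2).

Definition crit_rhs (R : realType) (e : R) : R :=
  (2 + Num.sqrt ((2 - e) * e) - e * (5 - 2 * e)) / (2 * (1 - e)).

(* The criterion, with tan(pi t/2)/(pi t/2) read as +oo at t = 1. *)
Definition criterion (R : realType) (t s : R) : Prop :=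
  t < 1 -> crit_rhs (epsilon_of s) <= tan (pi / 2 * t) / (pi / 2 * t).

From HB Require Import structures.
From mathcomp Require Import all_boot all_order all_algebra.
From mathcomp Require Import all_classical all_reals all_analysis.
From mathcomp Require Import ring lra.
Import Order.TTheory GRing.Theory Num.Theory.
Import numFieldNormedType.Exports.
Local Open Scope classical_set_scope.
Local Open Scope ring_scope.

(* Write x = pi t / 2 and s = 2 sqrt 2 cos th, so that Rfun t s = sin x (cos th + sin th)
   is concave in s, and Rfun vanishes at the corner (0, 2 sqrt 2) of the domain.
   On the edges t = 1 and s = 2 sqrt 2 explicit concave majorants touch Rfun.  Inside,
   the criterion says that the tangent plane of Rfun at (t, s) is nonnegative at the
   corner.  If so, that plane is a global concave majorant: for a fixed t' the plane
   minus the largest value of Rfun t' _ is (after squaring) a one-variable function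
   with a double root at t and a monotone second derivative, hence nonnegative.  If not,
   Rfun grows along the ray from the corner through (t, s) faster than linearly, so any
   concave majorant, being at least 0 at the corner, lies strictly above Rfun at (t, s).
   The sufficient condition reduces to x^3 cos x <= sin^3 x on [0, 2], a consequence of
   the Taylor bounds of sin and cos. *)

Section DeriveSign.
Context {R : realType}.
Context {f df : R -> R}.
Hypothesis f_df : forall y : R, is_derive y 1 f (df y).

Let derivable_f (y : R) : derivable f y 1.
Proof. exact: ex_derive. Qed.

Let derive1_f (y : R) : derive1 f y = df y.
Proof. by rewrite derive1E derive_val. Qed.

Let continuous_on_f (a b : R) : {within `[a, b], continuous f}.
Proof.
apply: continuous_subspaceT => y.
exact/differentiable_continuous/derivable1_diffP.
Qed.

Lemma ger0_is_derive_le (a b : R) : (forall y, a < y < b -> 0 <= df y) ->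
  forall u v, a <= u -> u <= v -> v <= b -> f u <= f v.
Proof.
move=> df_ge0 u v au uv vb.
apply: (ger0_derive1_le_cc (fun y _ => derivable_f y)) => //.
- by move=> y; rewrite in_itv /= derive1_f; exact: df_ge0.
- by rewrite in_itv /= au (le_trans uv vb).
- by rewrite in_itv /= vb (le_trans au uv).
Qed.

Lemma ler0_is_derive_ge (a b : R) : (forall y, a < y < b -> df y <= 0) ->
  forall u v, a <= u -> u <= v -> v <= b -> f v <= f u.
Proof.
move=> df_le0 u v au uv vb.
apply: (ler0_derive1_le_cc (fun y _ => derivable_f y)) => //.
- by move=> y; rewrite in_itv /= derive1_f; exact: df_le0.
- by rewrite in_itv /= vb (le_trans au uv).
- by rewrite in_itv /= au (le_trans uv vb).
Qed.

Lemma gtr0_is_derive_lt (a b : R) : (forall y, a < y < b -> 0 < df y) ->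
  forall u v, a <= u -> u < v -> v <= b -> f u < f v.
Proof.
move=> df_gt0 u v au uv vb.
apply: (gtr0_derive1_lt_cc (fun y _ => derivable_f y)) => //.
- by move=> y; rewrite in_itv /= derive1_f; exact: df_gt0.
- by rewrite in_itv /= au (le_trans (ltW uv) vb).
- by rewrite in_itv /= vb (le_trans au (ltW uv)).
Qed.

Lemma ltr0_is_derive_gt (a b : R) : (forall y, a < y < b -> df y < 0) ->
  forall u v, a <= u -> u < v -> v <= b -> f v < f u.
Proof.
move=> df_lt0 u v au uv vb.
apply: (ltr0_derive1_lt_cc (fun y _ => derivable_f y)) => //.
- by move=> y; rewrite in_itv /= derive1_f; exact: df_lt0.
- by rewrite in_itv /= vb (le_trans au (ltW uv)).
- by rewrite in_itv /= au (le_trans (ltW uv) vb).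
Qed.

Lemma ge0_of_is_derive_ge0 (b : R) : f 0 = 0 -> (forall y, 0 < y < b -> 0 <= df y) ->
  forall y, 0 <= y -> y <= b -> 0 <= f y.
Proof. by move=> f0 df_ge0 y y0 yb; rewrite -f0; exact: (@ger0_is_derive_le 0 b). Qed.

End DeriveSign.

Lemma is_derive0_gt_exists {R : realType} (f : R -> R) (d v del : R) :
  is_derive (0 : R) 1 f d -> v < d -> 0 < del ->
  exists h : R, [/\ 0 < h, h < del & f 0 + h * v < f h].
Proof.
move=> fd vd del0.
have cv : (fun h : R => h^-1 *: ((f \o shift 0) (h *: 1) - f 0)) @ 0^' --> d.
  have := @ex_derive _ _ _ _ _ _ _ fd; rewrite /derivable => df.
  by have <- : 'D_1 f 0 = d by exact: derive_val.
have [e /= e0 He] := @cvgr_gt R _ _ _ _ d cv v vd.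
pose h := Num.min (e / 2) (del / 2).
have h0 : 0 < h by rewrite lt_min !divr_gt0.
have he : h < e by rewrite gt_min ltr_pdivrMr // ltr_pMr // ltr1n.
have hd : h < del by rewrite gt_min orbC ltr_pdivrMr // ltr_pMr // ltr1n.
have hb : ball_ Num.Def.normr 0 e h by rewrite /ball_ /= sub0r normrN gtr0_norm.
have := He h hb; rewrite gt_eqF //= => /(_ isT).
rewrite /GRing.scale /= mulr1 addr0 ltr_pdivlMl // => hq.
by exists h; split => //; rewrite -ltrBrDl.
Qed.

Section DoubleRoot.
Context {R : realType}.
Context {P P1 m : R -> R} {x b : R}.
Hypothesis dP : forall y : R, is_derive y 1 P (P1 y).
Hypothesis dP1 : forall y : R, is_derive y 1 P1 (m y).
Hypothesis m_ndecr : forall u v, 0 <= u -> u <= v -> v <= b -> m u <= m v.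
Hypotheses (x_gt0 : 0 < x) (x_lt_b : x < b).
Hypotheses (Px : P x = 0) (P1x : P1 x = 0) (P0_ge0 : 0 <= P 0).

(* If m x < 0 then P' > 0 on [0, x), so P 0 < P x = 0. *)
Let m_root_ge0 : 0 <= m x.
Proof.
rewrite leNgt; apply/negP => mx_lt0.
have P1_gt0 u : 0 <= u -> u < x -> 0 < P1 u.
  move=> u0 ux; rewrite -P1x; apply: (ltr0_is_derive_gt dP1 0 x) => //.
  move=> z /andP[z0 zx]; apply: le_lt_trans mx_lt0.
  by apply: m_ndecr; [exact: ltW | exact: ltW | exact: ltW].
have : P 0 < P x.
  apply: (gtr0_is_derive_lt dP 0 x) => // z /andP[z0 zx].
  by apply: P1_gt0 => //; exact: ltW.
by rewrite Px ltNge P0_ge0.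
Qed.

Let ge0_right y : x <= y -> y <= b -> 0 <= P y.
Proof.
move=> xy yb; rewrite -Px; apply: (ger0_is_derive_le dP x b) => // z /andP[xz zb].
rewrite -P1x; apply: (ger0_is_derive_le dP1 x b) => //; try exact: ltW.
move=> w /andP[xw wb]; apply: le_trans m_root_ge0 _.
by apply: m_ndecr => //; exact: ltW.
Qed.

(* Either P' stays nonnegative on [0, y], or P' <= 0 on [y, x]: as m is nondecreasing,
   P' is nonincreasing on [0, x] up to the point where m changes sign. *)
Let ge0_left y : 0 <= y -> y <= x -> 0 <= P y.
Proof.
move=> y0 yx; have m_le u v : y <= u -> u <= v -> v < x -> m u <= m v.
  move=> yu uv vx; apply: m_ndecr => //; first exact: le_trans yu.
  exact: ltW (lt_trans vx x_lt_b).
have [/andP[my P1y]|notA] := boolP ((m y < 0) && (0 <= P1 y)).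
  apply: le_trans P0_ge0 _; apply: (ger0_is_derive_le dP 0 y) => // z /andP[z0 zy].
  apply: le_trans P1y _; apply: (ler0_is_derive_ge dP1 0 y) => //; try exact: ltW.
  move=> w /andP[w0 wy]; apply/ltW/le_lt_trans/my.
  apply: m_ndecr; [exact: ltW | exact: ltW | exact: ltW (le_lt_trans yx x_lt_b)].
rewrite -Px; apply: (ler0_is_derive_ge dP y x) => // z /andP[yz zx].
have [mz|mz] := leP 0 (m z).
  rewrite -P1x; apply: (ger0_is_derive_le dP1 z x) => //; try exact: ltW.
  by move=> w /andP[zw wx]; apply: le_trans mz _; apply: m_le => //; exact: ltW.
have P1y : P1 y < 0.
  rewrite ltNge; apply/negP => P1y; move/negP: notA; apply; rewrite P1y andbT.
  by apply: le_lt_trans mz; apply: m_le => //; exact: ltW.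
apply/ltW/le_lt_trans/P1y; apply: (ler0_is_derive_ge dP1 y z) => //; try exact: ltW.
move=> w /andP[yw wz]; apply/ltW/le_lt_trans/mz.
by apply: m_le => //; exact: ltW.
Qed.

Lemma ge0_of_double_root y : 0 <= y -> y <= b -> 0 <= P y.
Proof. by move=> y0 yb; have [/ge0_left|/ltW/ge0_right] := leP y x; apply. Qed.

End DoubleRoot.

Section Trigonometry.
Context {R : realType}.
Implicit Types x y u v : R.

Lemma pihalf_gt0 : 0 < pi / 2 :> R.
Proof. by rewrite divr_gt0 // pi_gt0. Qed.

Lemma pihalf_le_pi : pi / 2 <= pi :> R.
Proof. by rewrite ler_pdivrMr // ler_peMr ?ler1n // pi_ge0. Qed.

Lemma ler_sin u v : 0 <= u -> u <= v -> v <= pi / 2 -> sin u <= sin v.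
Proof.
move=> u0 uv vp; have Np : - (pi / 2) <= 0 :> R by rewrite oppr_le0 (ltW pihalf_gt0).
rewrite leNgt ltr_sin -?leNgt // in_itv /= ?vp ?(le_trans Np) ?(le_trans u0 uv) //.
exact: le_trans uv vp.
Qed.

Lemma ler_cos u v : 0 <= u -> u <= v -> v <= pi -> cos v <= cos u.
Proof.
move=> u0 uv vp.
by rewrite leNgt ltr_cos -?leNgt // in_itv /= ?u0 ?vp ?(le_trans u0 uv) ?(le_trans uv vp).
Qed.

Lemma cos_gt0_lt_pihalf x : 0 <= x -> x < pi / 2 -> 0 < cos x.
Proof.
move=> x0 xp; apply: cos_gt0_pihalf; rewrite xp andbT.
by rewrite (lt_le_trans _ x0) // oppr_lt0 pihalf_gt0.
Qed.

Lemma mulr_cos_le_sin x : 0 <= x -> x <= pi -> x * cos x <= sin x.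
Proof.
move=> x0 xp; rewrite -subr_ge0.
have D (y : R) : is_derive y 1 (fun z => sin z - z * cos z) (y * sin y).
  by apply: is_derive_eq; rewrite /GRing.scale /=; ring.
apply: (ge0_of_is_derive_ge0 D) x0 xp; first by rewrite sin0 mul0r subr0.
move=> y /andP[y0 yp]; rewrite mulr_ge0 ?(ltW y0) // sin_ge0_pi //.
by rewrite (ltW y0) (ltW yp).
Qed.

Lemma sin_le_tangent x y : 0 <= x -> x <= pi -> 0 <= y -> y <= pi ->
  sin y <= sin x + cos x * (y - x).
Proof.
move=> x0 xp y0 yp; rewrite -subr_ge0.
have D (z : R) : is_derive z 1 (fun z => sin x + cos x * (z - x) - sin z) (cos x - cos z).
  by apply: is_derive_eq; rewrite /GRing.scale /=; ring.
have -> : 0 = sin x + cos x * (x - x) - sin x by rewrite subrr mulr0 addr0 subrr.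
have [xy|yx] := leP x y.
  apply: (ger0_is_derive_le D x pi) => // z /andP[xz zp].
  by rewrite subr_ge0; apply: ler_cos => //; exact: ltW.
apply: (ler0_is_derive_ge D 0 x) => //; last exact: ltW.
by move=> z /andP[z0 zx]; rewrite subr_le0; apply: ler_cos => //; exact: ltW.
Qed.

Lemma taylor_sin_cos x : 0 <= x ->
  x - x ^+ 3 / 6 <= sin x /\ cos x <= 1 - x ^+ 2 / 2 + x ^+ 4 / 24.
Proof.
move=> x0.
have d1 (y : R) : is_derive y 1 (fun y => y - sin y) (1 - cos y).
  by apply: is_derive_eq; rewrite /GRing.scale /=; ring.
have d2 (y : R) : is_derive y 1 (fun y => cos y - 1 + y ^+ 2 / 2) (y - sin y).
  by apply: is_derive_eq; rewrite /GRing.scale /=; field.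
have d3 (y : R) : is_derive y 1 (fun y => sin y - y + y ^+ 3 / 6) (cos y - 1 + y ^+ 2 / 2).
  by apply: is_derive_eq; rewrite /GRing.scale /=; field.
have d4 (y : R) : is_derive y 1 (fun y => 1 - y ^+ 2 / 2 + y ^+ 4 / 24 - cos y)
    (sin y - y + y ^+ 3 / 6).
  by apply: is_derive_eq; rewrite /GRing.scale /=; field.
have sin_le_id y : 0 <= y -> y <= x -> 0 <= y - sin y.
  apply: (ge0_of_is_derive_ge0 d1); first by rewrite sin0 subr0.
  by move=> z _; rewrite subr_ge0 cos_le1.
have cos_ge_taylor2 y : 0 <= y -> y <= x -> 0 <= cos y - 1 + y ^+ 2 / 2.
  apply: (ge0_of_is_derive_ge0 d2); first by rewrite cos0 subrr expr0n mul0r addr0.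
  by move=> z /andP[z0 zx]; apply: sin_le_id; exact: ltW.
have sin_ge_taylor3 y : 0 <= y -> y <= x -> 0 <= sin y - y + y ^+ 3 / 6.
  apply: (ge0_of_is_derive_ge0 d3); first by rewrite sin0 subrr expr0n mul0r addr0.
  by move=> z /andP[z0 zx]; apply: cos_ge_taylor2; exact: ltW.
have cos_le_taylor4 y : 0 <= y -> y <= x -> 0 <= 1 - y ^+ 2 / 2 + y ^+ 4 / 24 - cos y.
  apply: (ge0_of_is_derive_ge0 d4).
    by rewrite cos0 !expr0n !mul0r subr0 addr0 subrr.
  by move=> z /andP[z0 zx]; apply: sin_ge_taylor3; exact: ltW.
have := sin_ge_taylor3 x x0 (lexx x); have := cos_le_taylor4 x x0 (lexx x).
split; lra.
Qed.

Lemma expr3_cos_le_sin x : 0 <= x -> x <= 2 -> x ^+ 3 * cos x <= sin x ^+ 3.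
Proof.
move=> x0 x2; have [sin_ge cos_le] := taylor_sin_cos x x0.
have lb_ge0 : 0 <= x - x ^+ 3 / 6 by nra.
apply: (@le_trans _ _ ((x - x ^+ 3 / 6) ^+ 3)); last first.
  by rewrite lerXn2r // nnegrE (le_trans lb_ge0).
apply: (@le_trans _ _ (x ^+ 3 * (1 - x ^+ 2 / 2 + x ^+ 4 / 24))).
  by rewrite ler_wpM2l // exprn_ge0.
have x24 : x ^+ 2 <= 4 by nra.
have : 0 <= x ^+ 4 * (x ^+ 2 / 24 - x ^+ 4 / 216) by rewrite mulr_ge0 ?exprn_ge0 //; nra.
nra.
Qed.

End Trigonometry.

Definition concave_majorant {R : realType} (D : set (R * R)) (F g : R -> R -> R) :=
  concave_on D g /\ forall p, D p -> F p.1 p.2 <= g p.1 p.2.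

Section ConcaveEnvelope.
Context {R : realType}.
Context {D : set (R * R)} {F : R -> R -> R}.

Lemma concave_envelope_eq g t s : D (t, s) -> concave_majorant D F g -> g t s = F t s ->
  concave_envelope D F t s = F t s.
Proof.
move=> Dts gmaj gts; rewrite /concave_envelope; set S := [set _ | _ in _].
have SF : S (F t s) by exists g.
have lbS : lbound S (F t s) by move=> _ [h [_ hF] <-]; exact: (hF (t, s)).
apply/le_anti; rewrite (lb_le_inf _ lbS) ?andbT; last by exists (F t s).
by apply: (ge_inf _ SF); exists (F t s).
Qed.

Lemma concave_envelope_ge v t s : (exists g, concave_majorant D F g) ->
  (forall g, concave_majorant D F g -> v <= g t s) -> v <= concave_envelope D F t s.
Proof.
move=> [g gmaj] le_v; apply: lb_le_inf; first by exists (g t s); exists g.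
by move=> _ [h hmaj <-]; exact: le_v.
Qed.

Lemma concave_majorant_ge_segment g p q l : concave_majorant D F g ->
  D p -> D q -> 0 <= F q.1 q.2 -> 0 <= l <= 1 ->
  l * F p.1 p.2 <= g (l * p.1 + (1 - l) * q.1) (l * p.2 + (1 - l) * q.2).
Proof.
move=> [gcvx gF] Dp Dq Fq /andP[l0 l1]; apply: le_trans (gcvx p q Dp Dq l _); last first.
  by rewrite l0.
rewrite -[X in X <= _]addr0 lerD ?mulr_ge0 ?subr_ge0 ?(le_trans Fq (gF q Dq)) //.
by rewrite ler_wpM2l // gF.
Qed.

End ConcaveEnvelope.

Lemma concave_sqrt_subr_sqr {R : realType} (r s1 s2 l : R) :
  s1 ^+ 2 <= r -> s2 ^+ 2 <= r -> 0 <= l <= 1 ->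
  l * Num.sqrt (r - s1 ^+ 2) + (1 - l) * Num.sqrt (r - s2 ^+ 2)
    <= Num.sqrt (r - (l * s1 + (1 - l) * s2) ^+ 2).
Proof.
move=> s1r s2r /andP[l0 l1].
have [r1 r2] : 0 <= r - s1 ^+ 2 /\ 0 <= r - s2 ^+ 2 by rewrite !subr_ge0.
set A := Num.sqrt (r - s1 ^+ 2); set B := Num.sqrt (r - s2 ^+ 2).
have [A0 B0] : 0 <= A /\ 0 <= B by rewrite !sqrtr_ge0.
have [A2 B2] : A ^+ 2 = r - s1 ^+ 2 /\ B ^+ 2 = r - s2 ^+ 2 by rewrite !sqr_sqrtr.
have AB : A * B <= r - s1 * s2.
  have rs : 0 <= r - s1 * s2 by nra.
  rewrite -ler_sqr ?nnegrE ?mulr_ge0 // exprMn A2 B2 -subr_ge0.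
  have -> : (r - s1 * s2) ^+ 2 - (r - s1 ^+ 2) * (r - s2 ^+ 2) = r * (s1 - s2) ^+ 2 by ring.
  by rewrite mulr_ge0 ?sqr_ge0 // (le_trans (sqr_ge0 s1)).
have L2 : (l * A + (1 - l) * B) ^+ 2 <= r - (l * s1 + (1 - l) * s2) ^+ 2.
  have -> : (l * A + (1 - l) * B) ^+ 2
      = l ^+ 2 * A ^+ 2 + (1 - l) ^+ 2 * B ^+ 2 + 2 * (l * (1 - l)) * (A * B) by ring.
  rewrite A2 B2; have : 0 <= l * (1 - l) by nra.
  nra.
by apply: le_trans (ler_wsqrtr L2); rewrite sqrtr_sqr ler_norm.
Qed.

(* Writing s = 2 sqrt 2 cos th, one has cs s = cos th and sn s = sin th, with
   th in [0, pi/4] when 2 <= s <= 2 sqrt 2; then Rfun t s = sin x (cos th + sin th)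
   with x = pi t / 2, and epsilon_of s = 1 - cos th. *)
Definition cs {R : realType} (s : R) := s / (2 * Num.sqrt 2).
Definition sn {R : realType} (s : R) := Num.sqrt (8 - s ^+ 2) / (2 * Num.sqrt 2).

Section Parametrization.
Context {R : realType}.
Implicit Types s t : R.

Lemma sqrt8_gt0 : 0 < 2 * Num.sqrt 2 :> R.
Proof. by rewrite mulr_gt0 // sqrtr_gt0. Qed.

Lemma sqr_sqrt8 : (2 * Num.sqrt 2) ^+ 2 = 8 :> R.
Proof. by rewrite exprMn sqr_sqrtr //; ring. Qed.

Lemma two_le_sqrt8 : 2 <= 2 * Num.sqrt 2 :> R.
Proof.
have := @sqrtr_ge0 R 2; have : Num.sqrt 2 ^+ 2 = 2 :> R by rewrite sqr_sqrtr.
nra.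
Qed.

Lemma sqr_le8 s : 2 <= s -> s <= 2 * Num.sqrt 2 -> s ^+ 2 <= 8.
Proof. by move=> s2 sR; rewrite -sqr_sqrt8 ler_sqr ?nnegrE ?(le_trans _ s2). Qed.

Lemma RfunE t s : Rfun t s = sin (pi / 2 * t) * (cs s + sn s).
Proof. by rewrite /Rfun /cs /sn -mulrDl. Qed.

Lemma cs_top : cs (2 * Num.sqrt 2) = 1 :> R.
Proof. by rewrite /cs divff // gt_eqF // sqrt8_gt0. Qed.

Lemma sn_top : sn (2 * Num.sqrt 2) = 0 :> R.
Proof. by rewrite /sn sqr_sqrt8 subrr sqrtr0 mul0r. Qed.

Lemma cs_sn_sqr s : s ^+ 2 <= 8 -> cs s ^+ 2 + sn s ^+ 2 = 1.
Proof.
move=> s8; rewrite /cs /sn !expr_div_n sqr_sqrtr ?subr_ge0 // sqr_sqrt8.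
by field.
Qed.

Lemma cs_sn_bounds s : 2 <= s -> s <= 2 * Num.sqrt 2 ->
  [/\ 0 <= sn s, sn s <= cs s, 0 < cs s & cs s <= 1].
Proof.
move=> s2 sR; have R0 := @sqrt8_gt0; have s8 := sqr_le8 s s2 sR.
have sn_ge0 : 0 <= sn s by rewrite /sn divr_ge0 ?sqrtr_ge0 ?(ltW R0).
split=> //.
- rewrite /sn /cs ler_pM2r ?invr_gt0 // -ler_sqr ?nnegrE ?sqrtr_ge0 ?(le_trans _ s2) //.
  by rewrite sqr_sqrtr ?subr_ge0 //; nra.
- by rewrite /cs divr_gt0 // (lt_le_trans _ s2).
- by rewrite /cs ler_pdivrMr // mul1r.
Qed.

Lemma sn_gt0 s : s < 2 * Num.sqrt 2 -> 2 <= s -> 0 < sn s.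
Proof.
move=> sR s2; rewrite /sn divr_gt0 ?sqrt8_gt0 // sqrtr_gt0 subr_gt0 -sqr_sqrt8.
by rewrite ltr_sqr ?nnegrE ?(le_trans _ s2) ?(ltW sqrt8_gt0).
Qed.

Lemma cs_sn_ge1 s : 2 <= s -> s <= 2 * Num.sqrt 2 -> 1 <= cs s + sn s.
Proof.
move=> s2 sR; have [sn0 _ cs0 cs1] := cs_sn_bounds s s2 sR.
have := cs_sn_sqr s (sqr_le8 s s2 sR); nra.
Qed.

Lemma cs_sn_concave s1 s2 l : 2 <= s1 -> s1 <= 2 * Num.sqrt 2 ->
  2 <= s2 -> s2 <= 2 * Num.sqrt 2 -> 0 <= l <= 1 ->
  l * (cs s1 + sn s1) + (1 - l) * (cs s2 + sn s2)
    <= cs (l * s1 + (1 - l) * s2) + sn (l * s1 + (1 - l) * s2).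
Proof.
move=> a1 b1 a2 b2 l01; rewrite /cs /sn.
have -> : forall a b c d e, l * (a / e + b / e) + (1 - l) * (c / e + d / e)
                          = (l * a + (1 - l) * c) / e + (l * b + (1 - l) * d) / e
  by move=> *; ring.
rewrite lerD2l ler_pM2r ?invr_gt0 ?sqrt8_gt0 //.
exact: concave_sqrt_subr_sqr (sqr_le8 s1 a1 b1) (sqr_le8 s2 a2 b2) l01.
Qed.

End Parametrization.

Section Boundary.
Context {R : realType}.
Implicit Types t s : R.

Lemma pihalf_mul_bounds {t} : 0 <= t -> t <= 1 -> 0 <= pi / 2 * t <= pi / 2.
Proof.
move=> t0 t1; have p0 := @pihalf_gt0 R.
by rewrite mulr_ge0 ?(ltW p0) //= ler_piMr // ltW.
Qed.

Lemma pihalf_mul_itv {t} : 0 < t -> t < 1 -> 0 < pi / 2 * t < pi / 2.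
Proof. by move=> t0 t1; rewrite mulr_gt0 ?pihalf_gt0 //= gtr_pMr ?pihalf_gt0. Qed.

Lemma sin_pihalf_mul_bounds {t} : 0 <= t -> t <= 1 -> 0 <= sin (pi / 2 * t) <= 1.
Proof.
move=> t0 t1; have /andP[x0 xp] := pihalf_mul_bounds t0 t1.
by rewrite sin_le1 andbT sin_ge0_pi // x0 (le_trans xp pihalf_le_pi).
Qed.

Lemma Rfun_le_cs_sn {t s} : Dom (t, s) -> Rfun t s <= cs s + sn s.
Proof.
move=> [/andP[t0 t1] /andP[s2 sR]]; have [sn0 _ cs0 _] := cs_sn_bounds s s2 sR.
have /andP[sin0 sin1] := sin_pihalf_mul_bounds t0 t1.
by rewrite RfunE ler_piMl // addr_ge0 // ltW.
Qed.

Lemma exists_concave_majorant_Rfun : exists g, concave_majorant (@Dom R) (@Rfun R) g.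
Proof.
exists (fun _ _ => 2); split; first by move=> p q _ _ l _ /=; lra.
move=> [t s] Dts; apply: le_trans (Rfun_le_cs_sn Dts) _.
by case: Dts => _ /andP[s2 sR]; have [_ sn_cs _ cs1] := cs_sn_bounds s s2 sR; lra.
Qed.

Lemma concave_envelope_Rfun_t1 s : 2 <= s -> s <= 2 * Num.sqrt 2 ->
  concave_envelope (@Dom R) (@Rfun R) 1 s = Rfun 1 s.
Proof.
move=> s2 sR; apply: (concave_envelope_eq (fun _ s' => cs s' + sn s')).
- by split; rewrite /= ?ler01 ?lexx ?s2.
- split; last by move=> [t' s'] /Rfun_le_cs_sn.
  move=> [t1 s1] [t2 s2'] [_ /andP[a1 b1]] [_ /andP[a2 b2]] l l01 /=.
  exact: cs_sn_concave.
- by rewrite RfunE mulr1 sin_pihalf mul1r.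
Qed.

Lemma concave_envelope_Rfun_top t : 0 <= t -> t <= 1 ->
  concave_envelope (@Dom R) (@Rfun R) t (2 * Num.sqrt 2) = Rfun t (2 * Num.sqrt 2).
Proof.
move=> t0 t1; have /andP[x0 xp] := pihalf_mul_bounds t0 t1.
set x := pi / 2 * t in x0 xp *.
apply: (concave_envelope_eq
  (fun t' s' => sin x + cos x * (pi / 2 * t' - x) + (cs s' + sn s') - 1)).
- by split; rewrite /= ?t0 ?t1 ?two_le_sqrt8 ?lexx.
- split.
    move=> [t1' s1] [t2' s2] [_ /andP[a1 b1]] [_ /andP[a2 b2]] l l01 /=.
    have := cs_sn_concave s1 s2 l a1 b1 a2 b2 l01; lra.
  move=> [a b] [/andP[a0 a1] /andP[b2 bR]] /=.
  have /andP[y0 yp] := pihalf_mul_bounds a0 a1.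
  have tangent := sin_le_tangent x (pi / 2 * a) x0 (le_trans xp pihalf_le_pi) y0 (le_trans yp pihalf_le_pi).
  have h1 := cs_sn_ge1 b b2 bR; have := sin_le1 (pi / 2 * a).
  rewrite RfunE; nra.
- by rewrite RfunE cs_top sn_top subrr mulr0 !addr0 addrK mulr1.
Qed.

End Boundary.

Lemma le_dot_unit {R : realType} (u v L cp sp : R) : 0 <= L ->
  u ^+ 2 + v ^+ 2 <= L ^+ 2 -> cp ^+ 2 + sp ^+ 2 = 1 -> u * cp + v * sp <= L.
Proof.
move=> L0 uvL unit; have := sqr_ge0 (u * sp - v * cp).
have : (u * cp + v * sp) ^+ 2 + (u * sp - v * cp) ^+ 2 = u ^+ 2 + v ^+ 2.
  by rewrite -[RHS]mulr1 -unit; ring.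
nra.
Qed.

Section TangentPlane.
Context {R : realType} {x c sg : R}.
Hypotheses (x_gt0 : 0 < x) (x_lt : x < pi / 2).
Hypotheses (sg_gt0 : 0 < sg) (sg_le_c : sg <= c) (unit_csg : c ^+ 2 + sg ^+ 2 = 1).
Let H := c + sg.
Let be := sin x * (c - sg) / sg.
Hypothesis gap_ge0 : 0 <= H * (sin x - x * cos x) - be * (1 - c).

Let a := H * cos x.
Let C0 := H * sin x - a * x + be * c.

Let sin_x_gt0 : 0 < sin x. Proof. by rewrite sin_gt0_pihalf // x_gt0. Qed.

Let cos_x_gt0 : 0 < cos x. Proof. exact: cos_gt0_lt_pihalf (ltW x_gt0) x_lt. Qed.

Let be_ge0 : 0 <= be.
Proof. by rewrite /be divr_ge0 ?mulr_ge0 ?subr_ge0 ?(ltW sin_x_gt0) ?(ltW sg_gt0). Qed.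

Let a_ge0 : 0 <= a.
Proof.
by rewrite /a /H mulr_ge0 ?addr_ge0 ?(ltW cos_x_gt0) ?(ltW sg_gt0) ?(le_trans (ltW sg_gt0)).
Qed.

(* The squared tangent plane minus the squared norm of (sin y + be, sin y):
   it has a double root at y = x. *)
Let P y := (C0 + a * y) ^+ 2 - (sin y + be) ^+ 2 - sin y ^+ 2.
Let P1 y := 2 * a * (C0 + a * y) - 2 * (sin y + be) * cos y - 2 * sin y * cos y.
Let P2 y := 2 * a ^+ 2 - 4 * cos y ^+ 2 + 4 * sin y ^+ 2 + 2 * be * sin y.

Let P_ge0 y : 0 <= y -> y <= pi / 2 -> 0 <= P y.
Proof.
have dP (z : R) : is_derive z 1 P (P1 z).
  by apply: is_derive_eq; rewrite /P1 /GRing.scale /=; ring.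
have dP1 (z : R) : is_derive z 1 P1 (P2 z).
  by apply: is_derive_eq; rewrite /P2 /GRing.scale /=; ring.
have P2_ndecr u v : 0 <= u -> u <= v -> v <= pi / 2 -> P2 u <= P2 v.
  move=> u0 uv vp; rewrite /P2 !cos2sin2.
  have := ler_sin u v u0 uv vp; have := be_ge0.
  have : 0 <= sin u by rewrite sin_ge0_pi // u0 (le_trans uv (le_trans vp pihalf_le_pi)).
  nra.
have sgn0 : sg != 0 by rewrite gt_eqF.
have plane_x : C0 + a * x = sin x / sg.
  rewrite -[sin x]mulr1 -unit_csg /C0 /a /be /H; field; exact: sgn0.
have norm_x : sin x + be = sin x * c / sg by rewrite /be; field; exact: sgn0.
apply: (ge0_of_double_root dP dP1 P2_ndecr x_gt0 x_lt).
- rewrite /P plane_x norm_x.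
  transitivity (sin x ^+ 2 * (1 - (c ^+ 2 + sg ^+ 2)) / sg ^+ 2); first by field.
  by rewrite unit_csg subrr mulr0 mul0r.
- by rewrite /P1 plane_x norm_x /a /H; field; exact: sgn0.
- rewrite /P sin0 mulr0 addr0 add0r expr0n /= subr0.
  have : be <= C0 by move: gap_ge0; rewrite /C0 /a; lra.
  have := be_ge0; nra.
Qed.

Lemma sin_mul_unit_le_plane y cp sp : 0 <= y -> y <= pi / 2 -> cp ^+ 2 + sp ^+ 2 = 1 ->
  sin y * (cp + sp) <= H * (sin x + cos x * (y - x)) - be * (cp - c).
Proof.
move=> y0 yp unit_p.
have sin_y_ge0 : 0 <= sin y by rewrite sin_ge0_pi // y0 (le_trans yp pihalf_le_pi).
have plane_ge0 : 0 <= C0 + a * y.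
  have : be <= C0 by move: gap_ge0; rewrite /C0 /a; lra.
  by move=> C0be; rewrite addr_ge0 ?(le_trans be_ge0 C0be) ?(mulr_ge0 a_ge0 y0).
have -> : H * (sin x + cos x * (y - x)) - be * (cp - c) = C0 + a * y - be * cp.
  by rewrite /C0 /a; ring.
have -> : sin y * (cp + sp) <= C0 + a * y - be * cp
    = ((sin y + be) * cp + sin y * sp <= C0 + a * y) by rewrite lerBrDr; congr (_ <= _); ring.
apply: le_dot_unit plane_ge0 _ unit_p.
by have := P_ge0 y y0 yp; rewrite /P subr_ge0 lerBrDl addrC.
Qed.

End TangentPlane.

Definition tangent_plane {R : realType} (t s t' s' : R) : R :=
  (cs s + sn s) * (sin (pi / 2 * t) + cos (pi / 2 * t) * (pi / 2 * t' - pi / 2 * t))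
  - sin (pi / 2 * t) * (cs s - sn s) / sn s * (cs s' - cs s).

(* Rfun vanishes at the corner (0, 2 sqrt 2) of Dom; the criterion says exactly
   that the tangent plane at (t, s) is nonnegative there. *)
Definition corner_gap {R : realType} (t s : R) : R := tangent_plane t s 0 (2 * Num.sqrt 2).

Lemma corner_gapE {R : realType} (t s : R) : corner_gap t s =
  (cs s + sn s) * (sin (pi / 2 * t) - pi / 2 * t * cos (pi / 2 * t))
  - sin (pi / 2 * t) * (cs s - sn s) / sn s * (1 - cs s).
Proof. by rewrite /corner_gap /tangent_plane cs_top mulr0; congr (_ - _); ring. Qed.

Lemma corner_gap_s2_ge0 {R : realType} (t : R) : 0 <= t -> t <= 1 -> 0 <= corner_gap t 2.
Proof.
move=> t0 t1; have /andP[x0 xp] := pihalf_mul_bounds t0 t1.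
have sn_cs : sn 2 = cs 2 :> R.
  rewrite /sn /cs; have -> : 8 - 2 ^+ 2 = 2 ^+ 2 :> R by rewrite expr2; lra.
  by rewrite sqrtr_sqr ger0_norm.
have cs2_ge0 : 0 <= cs 2 :> R by rewrite /cs divr_ge0 ?(ltW sqrt8_gt0).
rewrite corner_gapE sn_cs subrr mulr0 !mul0r subr0.
apply: mulr_ge0; first exact: addr_ge0.
by rewrite subr_ge0 mulr_cos_le_sin // (le_trans xp pihalf_le_pi).
Qed.

Section Interior.
Context {R : realType}.
Variables (t s : R).
Hypotheses (t_gt0 : 0 < t) (t_lt1 : t < 1) (s_ge2 : 2 <= s) (s_lt : s < 2 * Num.sqrt 2).

Let x := pi / 2 * t.
Let x_gt0 : 0 < x. Proof. by case/andP: (pihalf_mul_itv t_gt0 t_lt1). Qed.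
Let x_lt : x < pi / 2. Proof. by case/andP: (pihalf_mul_itv t_gt0 t_lt1). Qed.
Let cos_x_gt0 : 0 < cos x. Proof. exact: cos_gt0_lt_pihalf (ltW x_gt0) x_lt. Qed.
Let sin_x_gt0 : 0 < sin x. Proof. by rewrite sin_gt0_pihalf // x_gt0. Qed.
Let Dts : Dom (t, s). Proof. by split; apply/andP; split => //; exact: ltW. Qed.
Let sn_s_gt0 : 0 < sn s. Proof. exact: sn_gt0. Qed.
Let unit_cs_sn : cs s ^+ 2 + sn s ^+ 2 = 1.
Proof. by rewrite cs_sn_sqr // sqr_le8 // ltW. Qed.

Lemma concave_envelope_Rfun_eq : 0 <= corner_gap t s ->
  concave_envelope (@Dom R) (@Rfun R) t s = Rfun t s.
Proof.
move=> gap_ge0; apply: (concave_envelope_eq (tangent_plane t s) t s Dts); last first.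
  by rewrite /tangent_plane RfunE !subrr !mulr0 addr0 subr0 mulrC.
split.
  by move=> p q _ _ l _; rewrite le_eqVlt; apply/orP; left; apply/eqP;
    rewrite /tangent_plane /cs; ring.
move=> [a b] [/andP[a0 a1] /andP[b2 bR]] /=; rewrite RfunE.
have [_ sn_le_cs _ _] := cs_sn_bounds s s_ge2 (ltW s_lt).
have /andP[y0 yp] := pihalf_mul_bounds a0 a1.
rewrite corner_gapE in gap_ge0.
exact: (sin_mul_unit_le_plane x_gt0 x_lt sn_s_gt0 sn_le_cs unit_cs_sn gap_ge0 _ _ _ y0 yp
  (cs_sn_sqr b (sqr_le8 b b2 bR))).
Qed.

Lemma is_derive_Rfun_ray :
  is_derive (0 : R) 1 (fun l => Rfun (t + l * t) (s + l * (s - 2 * Num.sqrt 2)))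
    (Rfun t s - corner_gap t s).
Proof.
pose r : R := 2 * Num.sqrt 2; pose q := Num.sqrt (8 - s ^+ 2).
pose u (l : R) := pi / 2 * (t + l * t); pose w (l : R) := 8 - (s + l * (s - r)) ^+ 2.
have du : is_derive (0 : R) 1 u x by apply: is_derive_eq; rewrite /GRing.scale /= /x; ring.
have dw : is_derive (0 : R) 1 w (- (2 * s * (s - r))).
  by apply: is_derive_eq; rewrite /GRing.scale /=; ring.
have w0 : 0 < w 0 by rewrite /w mul0r addr0 subr_gt0 -sqr_sqrt8 ltr_sqr ?nnegrE
  ?(le_trans _ s_ge2) ?(ltW sqrt8_gt0).
have dsin := is_derive1_comp (is_derive_sin _) du.
have dsqrt := is_derive1_comp (is_derive1_sqrt w0) dw.
have dh : is_derive (0 : R) 1 (fun l => (s + l * (s - r) + (Num.sqrt \o w) l) / r)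
    ((s - r + (2 * q)^-1 * - (2 * s * (s - r))) / r).
  apply: is_derive_eq; rewrite /GRing.scale /= /q /w mul0r addr0; ring.
apply: is_derive_eq (is_deriveM dsin dh) _.
have qn0 : q != 0 by rewrite gt_eqF // /q sqrtr_gt0 (lt_le_trans w0) // /w mul0r addr0.
rewrite /GRing.scale /= /u /w !mul0r !addr0 -/q RfunE corner_gapE /cs /sn -/q -/r -/x.
by field; rewrite qn0 gt_eqF ?sqrt8_gt0.
Qed.

(* The derivative along the ray exceeds Rfun t s, so some point p beyond (t, s) has
   Rfun p > (1 + h) Rfun t s; (t, s) divides the segment from p to the corner in the
   ratio 1 : h, and Rfun is 0 at the corner. *)
Lemma Rfun_lt_concave_envelope : corner_gap t s < 0 ->
  Rfun t s < concave_envelope (@Dom R) (@Rfun R) t s.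
Proof.
move=> gap_lt0; have R0 := @sqrt8_gt0 R.
have s_gt2 : 2 < s.
  rewrite lt_neqAle s_ge2 andbT; apply: contraTneq gap_lt0 => <-.
  by rewrite -leNgt corner_gap_s2_ge0 // ltW.
pose del := Num.min ((1 - t) / t) ((s - 2) / (2 * Num.sqrt 2 - s)).
have del_gt0 : 0 < del by rewrite lt_min !divr_gt0 ?subr_gt0.
have [|h [h_gt0 h_lt Rh]] := is_derive0_gt_exists _ _ (Rfun t s) _ is_derive_Rfun_ray _ del_gt0.
  by move: gap_lt0; lra.
move: h_lt; rewrite lt_min !ltr_pdivlMr ?subr_gt0 // => /andP[ht hs].
rewrite !mul0r !addr0 in Rh.
have h1_gt0 : 0 < 1 + h by rewrite addr_gt0.
have Dp : Dom (t + h * t, s + h * (s - 2 * Num.sqrt 2)).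
  have hs0 : 0 < h * (2 * Num.sqrt 2 - s) by rewrite mulr_gt0 ?subr_gt0.
  by split; apply/andP; split => /=; move: t_gt0 s_lt; nra.
have Dq : Dom (0, 2 * Num.sqrt 2 : R) by split; rewrite ?lexx ?ler01 ?two_le_sqrt8.
have l01 : 0 <= (1 + h)^-1 <= 1 by rewrite invr_ge0 ltW //= invf_le1 // lerDl ltW.
have Rq : 0 <= Rfun 0 (2 * Num.sqrt 2) :> R by rewrite RfunE mulr0 sin0 mul0r.
apply: (@lt_le_trans _ _ ((1 + h)^-1 * Rfun (t + h * t) (s + h * (s - 2 * Num.sqrt 2)))).
  by rewrite mulrC ltr_pdivlMr //; move: Rh; lra.
apply: concave_envelope_ge; first exact: exists_concave_majorant_Rfun.
move=> g gmaj; have := concave_majorant_ge_segment _ _ _ _ gmaj Dp Dq Rq l01.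
have h1_neq0 : 1 + h != 0 by rewrite gt_eqF.
have -> : (1 + h)^-1 * (t + h * t) + (1 - (1 + h)^-1) * 0 = t by field.
by have -> : (1 + h)^-1 * (s + h * (s - 2 * Num.sqrt 2)) + (1 - (1 + h)^-1) * (2 * Num.sqrt 2)
  = s by field.
Qed.

Lemma corner_gap_mul_sn : corner_gap t s * sn s =
  sin x * (sn s + 1 - cs s) - (cs s + sn s) * sn s * (x * cos x).
Proof.
rewrite corner_gapE -/x; apply/eqP; rewrite -subr_eq0; apply/eqP.
transitivity (sin x * (cs s ^+ 2 + sn s ^+ 2 - 1)); first by field; rewrite gt_eqF.
by rewrite unit_cs_sn subrr mulr0.
Qed.

Lemma criterion_iff_corner_gap : criterion t s <-> 0 <= corner_gap t s.
Proof.
have [sn0 _ cs0 cs1] := cs_sn_bounds s s_ge2 (ltW s_lt).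
have d_gt0 : 0 < sn s + 1 - cs s by move: cs1 sn_s_gt0; lra.
have sqrt_eps : Num.sqrt ((2 - epsilon_of s) * epsilon_of s) = sn s.
  have -> : (2 - epsilon_of s) * epsilon_of s = 1 - cs s ^+ 2.
    by rewrite /epsilon_of -/(cs s); ring.
  by rewrite -unit_cs_sn [cs s ^+ 2 + _]addrC addrK sqrtr_sqr ger0_norm.
have rhsE : crit_rhs (epsilon_of s) = (cs s + sn s) * sn s / (sn s + 1 - cs s).
  rewrite /crit_rhs sqrt_eps /epsilon_of -/(cs s).
  have n1 : 2 * (1 - (1 - cs s)) != 0 by rewrite subKr mulf_neq0 // gt_eqF.
  apply/eqP; rewrite eqr_div ?(gt_eqF d_gt0) //; apply/eqP.
  transitivity ((cs s + sn s) * sn s * (2 * (1 - (1 - cs s))) +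
    (cs s ^+ 2 + sn s ^+ 2 - 1) * (1 - 2 * cs s)); first by ring.
  by rewrite unit_cs_sn subrr mul0r addr0.
have tanE : tan x / x = sin x / (cos x * x) by rewrite /tan; field; rewrite !gt_eqF.
rewrite /criterion rhsE tanE -/x ler_pdivrMr // mulrAC ler_pdivlMr ?(mulr_gt0 cos_x_gt0 x_gt0) //.
rewrite -(pmulr_lge0 _ sn_s_gt0) corner_gap_mul_sn subr_ge0 [cos x * x]mulrC.
by split=> [/(_ t_lt1)|].
Qed.

Lemma corner_gap_ge0_of_Rfun_le : Rfun t s <= pi / 2 * t -> 0 <= corner_gap t s.
Proof.
rewrite RfunE -/x => Rfun_le.
have [sn0 _ _ cs1] := cs_sn_bounds s s_ge2 (ltW s_lt).
have H1 := cs_sn_ge1 s s_ge2 (ltW s_lt).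
set H := cs s + sn s in Rfun_le H1 *.
have cube_bound := expr3_cos_le_sin x (ltW x_gt0) (ltW (lt_trans x_lt (pihalf_lt2 R))).
have HCx : H * cos x * x <= sin x.
  have x2_gt0 : 0 < x ^+ 2 by rewrite exprn_gt0.
  rewrite -(ler_pM2r x2_gt0).
  have H_ge0 : 0 <= H := le_trans ler01 H1.
  have HS2 : (H * sin x) ^+ 2 <= x ^+ 2.
    by rewrite ler_sqr ?nnegrE ?(mulr_ge0 H_ge0 (ltW sin_x_gt0)) ?(ltW x_gt0) // mulrC.
  have HH : H * sin x ^+ 3 <= H ^+ 2 * sin x ^+ 3.
    by rewrite ler_pM2r ?exprn_gt0 // expr2 ler_peMl.
  have -> : H * cos x * x * x ^+ 2 = H * (x ^+ 3 * cos x) by ring.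
  apply: le_trans (ler_wpM2l H_ge0 cube_bound) _; apply: le_trans HH _.
  have -> : H ^+ 2 * sin x ^+ 3 = (H * sin x) ^+ 2 * sin x by ring.
  by rewrite mulrC ler_pM2l.
rewrite -(pmulr_lge0 _ sn_s_gt0) corner_gap_mul_sn -/H subr_ge0.
have : sn s * (H * cos x * x) <= sn s * sin x by rewrite ler_wpM2l.
have : 0 <= sin x * (1 - cs s) by rewrite mulr_ge0 ?subr_ge0 // ltW.
lra.
Qed.

End Interior.

Lemma criterion_top {R : realType} (t : R) : 0 < t -> criterion t (2 * Num.sqrt 2).
Proof.
move=> t_gt0 t_lt1; have /andP[x_gt0 x_lt] := pihalf_mul_itv t_gt0 t_lt1.
have cos_gt0 := cos_gt0_lt_pihalf _ (ltW x_gt0) x_lt.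
rewrite /epsilon_of -/(cs _) cs_top /crit_rhs subrr !(mulr0, subr0, sqrtr0, addr0, mul0r).
rewrite mulr1 divff // /tan ler_pdivlMr // mul1r ler_pdivlMr //.
by rewrite mulr_cos_le_sin ?(ltW x_gt0) // (le_trans (ltW x_lt) pihalf_le_pi).
Qed.

Theorem mainTheorem3 (R : realType) (t s : R) :
  0 < t <= 1 -> 2 <= s <= 2 * Num.sqrt 2 ->
  (Rfun t s = concave_envelope (@Dom R) (@Rfun R) t s <-> criterion t s) /\
  ((pi / 2 * t) / sin (pi / 2 * t) >= (s + Num.sqrt (8 - s ^+ 2)) / (2 * Num.sqrt 2) ->
   criterion t s).
Proof.
move=> /andP[t_gt0 t_le1] /andP[s_ge2 s_le].
have [t_lt1|t_ge1] := ltP t 1; last first.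
  have -> : t = 1 by apply/le_anti; rewrite t_le1 t_ge1.
  have : criterion 1 s by rewrite /criterion ltxx.
  by rewrite concave_envelope_Rfun_t1 //; tauto.
have [s_lt|s_ge] := ltP s (2 * Num.sqrt 2); last first.
  have -> : s = 2 * Num.sqrt 2 by apply/le_anti; rewrite s_le s_ge.
  rewrite (concave_envelope_Rfun_top t (ltW t_gt0) t_le1).
  by have := criterion_top t t_gt0; tauto.
have crit := criterion_iff_corner_gap t s t_gt0 t_lt1 s_ge2 s_lt.
split; first split.
- move=> Rfun_eq; apply/crit; rewrite leNgt; apply/negP => gap_lt0.
  have := Rfun_lt_concave_envelope t s t_gt0 t_lt1 s_ge2 s_lt gap_lt0.
  by rewrite -Rfun_eq ltxx.
- by move/crit/(concave_envelope_Rfun_eq t s t_gt0 t_lt1 s_ge2 s_lt) ->.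
- move=> le_ratio; apply/crit; apply: (corner_gap_ge0_of_Rfun_le t s t_gt0 t_lt1 s_ge2 s_lt).
  have sin_gt0 : 0 < sin (pi / 2 * t) by rewrite sin_gt0_pihalf // pihalf_mul_itv.
  by rewrite RfunE mulrC -ler_pdivlMr // -[cs s + sn s]mulrDl.
Qed.
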